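(* Let $X$ be a CFG-space over a Boolean ring $B$, $0\in X$, and let $U\subseteq X$ with $0\in U$ be a CFG-space. Then $U^{\perp}=\{x\in X: x\perp y \text{ for all } y\in U\}$ is a CFG-space, and every element of $X$ is a convex combination of elements of $U\cup U^{\perp}$.
   Context: $B$ is a Boolean ring ($a\vee b=a+b+ab$, $a\le b\iff ab=a$; $a_1\oplus\cdots\oplus a_n$ denotes a sum of pairwise disjoint elements). A Boolean metric space over $B$: set $X$ with $d:X\times X\to B$, $d(x,y)=0\iff x=y$, symmetric, $d(x,z)\le d(x,y)\vee d(y,z)$. For $x_1,\dots,x_n\in X$, $a_i\in B$ with $a_1\oplus\cdots\oplus a_n=1$, $x$ is a convex combination of the $x_i$ with coefficients $a_i$ if $a_id(x,x_i)=0$ for all $i$. A CFG-space is a space in which all such combinations exist and every element is a convex combination of elements of some fixed finite subset. In the pointed space $(X,0)$, $|x|=d(0,x)$, and $x\perp y$ (orthogonal) means $d(x,y)=|x|\vee|y|$. *)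

From HB Require Import structures.
From mathcomp Require Import all_boot all_algebra.
Set Implicit Arguments. Unset Strict Implicit. Unset Printing Implicit Defensive.
Import GRing.Theory.
Local Open Scope ring_scope.

Definition boolean_ring (B : comPzRingType) : Prop := forall a : B, a * a = a.

Definition bjoin (B : comPzRingType) (a b : B) : B := a + b + a * b.

Definition ble (B : comPzRingType) (a b : B) : Prop := a * b = a.

Definition bmetric (B : comPzRingType) (X : Type) (d : X -> X -> B) : Prop :=
  (forall x y, d x y = 0 <-> x = y) /\
  (forall x y, d x y = d y x) /\
  (forall x y z, ble (d x z) (bjoin (d x y) (d y z))).

Definition bpartition (B : comPzRingType) (n : nat) (a : 'I_n -> B) : Prop :=
  (forall i j : 'I_n, i != j -> a i * a j = 0) /\ \sum_(i < n) a i = 1.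

Definition convcomb (B : comPzRingType) (X : Type) (d : X -> X -> B)
  (n : nat) (xs : 'I_n -> X) (a : 'I_n -> B) (x : X) : Prop :=
  forall i : 'I_n, a i * d x (xs i) = 0.

Definition convcomb_of (B : comPzRingType) (X : Type) (d : X -> X -> B)
  (S : X -> Prop) (x : X) : Prop :=
  exists n (xs : 'I_n -> X) (a : 'I_n -> B),
    (forall i, S (xs i)) /\ bpartition a /\ convcomb d xs a x.

(* The subset U of the Boolean metric space (X, d), with the restricted metric,
   is a CFG-space: all convex combinations of elements of U exist in U, and
   every element of U is a convex combination of elements of a fixed finite
   subset {f 0, ..., f (m-1)} of U. *)
Definition CFG (B : comPzRingType) (X : Type) (d : X -> X -> B) (U : X -> Prop)
  : Prop :=
  (forall n (xs : 'I_n -> X) (a : 'I_n -> B),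
      (forall i, U (xs i)) -> bpartition a ->
      exists x, U x /\ convcomb d xs a x) /\
  (exists m (f : 'I_m -> X), (forall j, U (f j)) /\
      forall x, U x -> convcomb_of d (fun y => exists j, y = f j) x).

Definition bnorm (B : comPzRingType) (X : Type) (d : X -> X -> B) (o x : X) : B :=
  d o x.

Definition orth (B : comPzRingType) (X : Type) (d : X -> X -> B) (o x y : X)
  : Prop := d x y = bjoin (bnorm d o x) (bnorm d o y).

Definition perp (B : comPzRingType) (X : Type) (d : X -> X -> B) (o : X)
  (U : X -> Prop) : X -> Prop := fun x => forall y, U y -> orth d o x y.

From HB Require Import structures.
From mathcomp Require Import all_boot all_algebra.
Set Implicit Arguments. Unset Strict Implicit. Unset Printing Implicit Defensive.
Import GRing.Theory.
Local Open Scope ring_scope.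

(* Let U be generated (as a CFG-space) by g_0, ..., g_(k-1).  The element
   far(y) = d(y,g_0) ... d(y,g_(k-1)) of B is the part of B on which y is at
   "full distance" from every point of U.  The idea is to split every point y
   along far(y):
   - the convex combination p of y (coefficient far(y)) and 0 (coefficient
     1 - far(y)) is orthogonal to U, and is called the projection of y;
   - disjointifying the family d(y,g_j) gives a partition of 1 into the
     blocks (1 - d(y,g_i)) d(y,g_0) ... d(y,g_(i-1)) and far(y); on these
     blocks y coincides with g_i, resp. with its projection, which writes y
     as a convex combination of elements of U and U^perp.
   U^perp is closed under convex combinations by a direct computation, and
   it is generated by the projections of the generators of X: a point of
   U^perp close (on a block c) to y is, on c, also close to the projection
   of y, because on c its norm lies below far(y). *)

Section BooleanRing.
Variable B : comPzRingType.
Hypothesis hB : boolean_ring B.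

Lemma addrr_bool (a : B) : a + a = 0.
Proof.
have := hB (a + a); rewrite mulrDl !mulrDr hB => h.
by apply: (@addrI _ (a + a)); rewrite addr0 -{3}h !addrA.
Qed.

Lemma mulr_compl (c : B) : c * (1 - c) = 0.
Proof. by rewrite mulrBr mulr1 hB subrr. Qed.

Lemma mulr_join0 (c p q : B) : c * p = 0 -> c * bjoin p q = c * q.
Proof. by move=> h; rewrite /bjoin !mulrDr h mulrA h mul0r add0r addr0. Qed.

Lemma mulr_join1 (c p q : B) : c * p = c -> c * bjoin p q = c.
Proof. by move=> h; rewrite /bjoin !mulrDr h mulrA h -addrA addrr_bool addr0. Qed.

Lemma mulr_joinl (c p p' q : B) :
  c * p = c * p' -> c * bjoin p q = c * bjoin p' q.
Proof. by move=> h; rewrite /bjoin !mulrDr h mulrA h mulrA. Qed.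

Lemma compl_ext (r y z : B) :
  r * y = r * z -> (1 - r) * y = (1 - r) * z -> y = z.
Proof.
move=> h1 h2; rewrite -(mul1r y) -(mul1r z) -(subrK r 1).
by rewrite (mulrDl _ r y) (mulrDl _ r z) h1 h2.
Qed.

Lemma partition_ext n (a : 'I_n -> B) (y z : B) :
  bpartition a -> (forall i, a i * y = a i * z) -> y = z.
Proof.
move=> [_ hs] h.
by rewrite -(mul1r y) -(mul1r z) -hs !mulr_suml; apply: eq_bigr => i _.
Qed.

Lemma pair_partition (r : B) :
  bpartition (fun i : 'I_2 => if val i == 0%N then r else 1 - r).
Proof.
split; last by rewrite !big_ord_recr big_ord0 /= add0r addrC subrK.
move=> [[|[|i]] hi] [[|[|j]] hj] //= _.
- exact: mulr_compl.
- by rewrite mulrC mulr_compl.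
Qed.

Definition prefix (s : nat -> B) (n : nat) : B := \prod_(i < n) s i.

Lemma prefixS (s : nat -> B) n : prefix s n.+1 = prefix s n * s n.
Proof. by rewrite /prefix big_ord_recr. Qed.

Lemma prefix_absorb (s : nat -> B) n j :
  (j < n)%N -> prefix s n * s j = prefix s n.
Proof.
elim: n => [//|n IH]; rewrite ltnS leq_eqVlt => /orP[/eqP->|hj].
  by rewrite prefixS -mulrA hB.
by rewrite prefixS mulrAC IH.
Qed.

Lemma prefix_above (s : nat -> B) n (c : B) :
  (forall l, (l < n)%N -> c * s l = c) -> c * prefix s n = c.
Proof.
elim: n => [|n IH] h; first by rewrite /prefix big_ord0 mulr1.
by rewrite prefixS mulrA IH ?h // => l hl; apply: h; apply: ltnW.
Qed.

Lemma prefix_telescope (s : nat -> B) n :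
  \sum_(i < n) (1 - s i) * prefix s i + prefix s n = 1.
Proof.
elim: n => [|n IH]; first by rewrite big_ord0 /prefix big_ord0 add0r.
by rewrite big_ord_recr /= prefixS mulrBl mul1r (mulrC (s n)) -addrA addrNK IH.
Qed.

Definition disjointify (s : nat -> B) (k : nat) (i : 'I_k.+1) : B :=
  if (i < k)%N then (1 - s i) * prefix s i else prefix s k.

Lemma disjointify_partition (s : nat -> B) k : bpartition (disjointify s (k:=k)).
Proof.
split; last first.
  rewrite big_ord_recr /= /disjointify ltnn -[RHS](prefix_telescope s k).
  by congr (_ + _); apply: eq_bigr => i _; rewrite [(_ < k)%N](ltn_ord i).
have lt_disj (i j : 'I_k.+1) : (i < j)%N -> disjointify s i * disjointify s j = 0.
  move=> hij; have hik : (i < k)%N by apply: leq_trans hij _; rewrite -ltnS.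
  have [c ->] : exists c, disjointify s j = c * prefix s j.
    rewrite /disjointify; case: ifP => hjk; first by exists (1 - s j).
    exists 1; rewrite mul1r; congr prefix; apply/eqP.
    by rewrite eq_sym; have := ltn_ord j; rewrite ltnS leq_eqVlt hjk orbF.
  have vanish : prefix s j * (1 - s i) = 0.
    by rewrite mulrBr mulr1 prefix_absorb // subrr.
  by rewrite /disjointify hik mulrC -mulrA [prefix s j * _]mulrA vanish mul0r mulr0.
move=> i j; rewrite neq_ltn => /orP[h|h]; first exact: lt_disj.
by rewrite mulrC; apply: lt_disj.
Qed.

End BooleanRing.

Section BooleanMetric.
Variables (B : comPzRingType) (X : Type) (d : X -> X -> B).
Hypothesis hB : boolean_ring B.
Hypothesis hd : bmetric d.

Lemma dist_sym x y : d x y = d y x.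
Proof. by case: hd => _ []. Qed.

Lemma dist_transfer (c : B) x y z : c * d x y = 0 -> c * d x z = c * d y z.
Proof.
case: hd => _ [_ ht] h.
have below u v w : c * d u v = 0 -> c * d u w = c * d u w * d v w.
  by move=> huv; rewrite -{1}(ht u v w) /ble mulrCA (mulr_join0 _ huv) mulrCA mulrA.
have h' : c * d y x = 0 by rewrite dist_sym.
by rewrite (below _ _ _ h) (below _ _ z h') -mulrA (mulrC (d x z)) mulrA.
Qed.

Lemma pair_combination (r : B) (y z : X) :
  CFG d (fun _ => True) -> exists p, r * d p y = 0 /\ (1 - r) * d p z = 0.
Proof.
move=> [hconv _].
pose xs := fun i : 'I_2 => if val i == 0%N then y else z.
have [p [_ hp]] := hconv 2 xs _ (fun _ => I) (pair_partition hB r).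
by exists p; split; [exact: (hp ord0) | exact: (hp (@Ordinal 2 1 isT))].
Qed.

Variables (o : X) (U : X -> Prop).

Lemma perp_convex n (xs : 'I_n -> X) (a : 'I_n -> B) x :
  (forall i, perp d o U (xs i)) -> bpartition a -> convcomb d xs a x ->
  perp d o U x.
Proof.
move=> hxs ha hx u hu; rewrite /orth /bnorm.
apply: (partition_ext ha) => i.
rewrite (dist_transfer _ (hx i)) (mulr_joinl _ (p' := d o (xs i))) ?hxs //.
by rewrite (dist_sym o x) (dist_transfer _ (hx i)) (dist_sym (xs i) o).
Qed.

Lemma perp_norm_below (c : B) x y u :
  perp d o U x -> c * d x y = 0 -> U u -> c * d o x * d y u = c * d o x.
Proof.
move=> hx hxy hu.
rewrite mulrAC -(dist_transfer _ hxy) hx // mulrAC mulr_join1 //.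
by rewrite /bnorm -mulrA hB.
Qed.

Hypothesis hUo : U o.

Lemma perp_of_split (r : B) y p :
  (forall u, U u -> r * d y u = r) -> r * d p y = 0 -> (1 - r) * d p o = 0 ->
  perp d o U p.
Proof.
move=> hr h1 h2 u hu; rewrite /orth /bnorm.
apply: (compl_ext (r := r)).
  by rewrite (dist_transfer _ h1) hr // mulr_join1 // dist_sym
    (dist_transfer _ h1) hr.
by rewrite (dist_transfer _ h2) mulr_join0 // dist_sym.
Qed.

Variables (k : nat) (g : 'I_k -> X).
Hypothesis hgU : forall j, U (g j).
Hypothesis hg : forall x, U x -> convcomb_of d (fun y => exists j, y = g j) x.

Definition dist_gen (y : X) (l : nat) : B := oapp (fun j => d y (g j)) 1 (insub l).

Lemma dist_genE y (j : 'I_k) : dist_gen y j = d y (g j).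
Proof. by rewrite /dist_gen valK. Qed.

Definition far (y : X) : B := prefix (dist_gen y) k.

Lemma far_absorb y u : U u -> far y * d y u = far y.
Proof.
move=> hu; have [n [xs [b [hxs [hb hc]]]]] := hg hu.
apply: (partition_ext hb) => i; have [j hj] := hxs i.
have hbi : b i * d u (g j) = 0 by rewrite -hj; apply: hc.
rewrite mulrCA dist_sym (dist_transfer _ hbi) dist_sym mulrCA -dist_genE.
by rewrite /far prefix_absorb.
Qed.

Definition projection (y p : X) : Prop :=
  far y * d p y = 0 /\ (1 - far y) * d p o = 0.

Lemma projection_perp y p : projection y p -> perp d o U p.
Proof. by case=> h1 h2; apply: perp_of_split h1 h2 => u; apply: far_absorb. Qed.

Lemma perp_near_projection (c : B) x y p :
  perp d o U x -> c * d x y = 0 -> projection y p -> c * d x p = 0.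
Proof.
move=> hx hxy [h1 h2]; apply: (compl_ext (r := far y)); rewrite mulr0.
  by rewrite mulrCA dist_sym (dist_transfer _ h1) mulrCA dist_sym hxy mulr0.
have norm_below : c * d o x * far y = c * d o x.
  apply: prefix_above => l hl; have -> : l = Ordinal hl by [].
  by rewrite dist_genE (perp_norm_below hx hxy (hgU _)).
rewrite mulrCA dist_sym (dist_transfer _ h2) mulrCA mulrBl mul1r.
by rewrite (mulrC (far y)) norm_below subrr.
Qed.

Hypothesis hX : CFG d (fun _ => True).

Lemma perp_generated : exists m (q : 'I_m -> X),
  (forall j, perp d o U (q j)) /\
  forall x, perp d o U x -> convcomb_of d (fun y => exists j, y = q j) x.
Proof.
have [_ [m [f [_ hf]]]] := hX.
have [q hq] := fin_all_exists (fun j : 'I_m => pair_combination (far (f j)) (f j) o hX).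
exists m, q; split=> [j|x hx]; first exact: projection_perp (hq j).
have [n [xs [a [hxs [ha hc]]]]] := hf x I.
have [J hJ] := fin_all_exists hxs.
exists n, (fun i => q (J i)), a; split=> [i|]; first by exists (J i).
split=> // i; apply: (perp_near_projection hx _ (hq (J i))).
by rewrite -hJ; apply: hc.
Qed.

Lemma decomposition x : convcomb_of d (fun y => U y \/ perp d o U y) x.
Proof.
have [p hp] := pair_combination (far x) x o hX.
exists k.+1, (fun i : 'I_k.+1 => oapp g p (insub (val i))).
exists (disjointify (dist_gen x) (k := k)).
split; first by move=> i; case: insubP => [j _ _|_] /=;
  [left | right; apply: projection_perp hp].
split; first exact: disjointify_partition.
move=> i; rewrite /disjointify; case: insubP => [j hi ej|hn] /=.
  by rewrite hi -ej dist_genE mulrAC (mulrC (1 - _)) mulr_compl ?mul0r.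
by rewrite (negbTE hn) dist_sym; case: hp.
Qed.

End BooleanMetric.

Theorem mainTheorem9 (B : comPzRingType) (X : Type) (d : X -> X -> B) (o : X)
  (U : X -> Prop) :
  boolean_ring B -> bmetric d -> CFG d (fun _ => True) ->
  U o -> CFG d U ->
  CFG d (perp d o U) /\
  (forall x : X, convcomb_of d (fun y => U y \/ perp d o U y) x).
Proof.
move=> hB hd hX hUo [_ [k [g [hgU hg]]]].
split; last exact: (decomposition hB hd hUo hgU hg hX).
split; last exact: (perp_generated hB hd hUo hgU hg hX).
move=> n xs a hxs ha; have [x [_ hx]] := hX.1 n xs a (fun _ => I) ha.
by exists x; split=> //; apply: perp_convex hx.
Qed.
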